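(* Let $g$ be the Lorentzian form on $\mathbb{R}^4$ with matrix $\mathrm{diag}(1,1,1,-c^2)$ in the canonical basis ($c>0$), and let $\mathcal{L}^{\uparrow}_+$ be the proper orthochronous Lorentz group of $g$ (the linear maps preserving $g$, with determinant $1$, and preserving the time orientation). If $\Lambda$ is an additive subgroup of $\mathbb{R}^4$ with $L(\Lambda)\subseteq\Lambda$ for all $L\in\mathcal{L}^{\uparrow}_+$, then $\Lambda=\{0\}$ or $\Lambda=\mathbb{R}^4$. *)

(* Vectors of R^4 are row vectors 'rV[R]_4; a linear map
   R^4 -> R^4 is a matrix M acting by v |-> v *m M.  Coordinate 3 is time. *)
From HB Require Import structures.
From mathcomp Require Import all_boot all_order all_algebra.
From mathcomp Require Import reals.
Set Implicit Arguments. Unset Strict Implicit. Unset Printing Implicit Defensive.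
Import Order.TTheory GRing.Theory Num.Theory.
Local Open Scope ring_scope.

Definition tidx : 'I_4 := @Ordinal 4 3 erefl.

Definition lorentz_form {R : realType} (c : R) (u v : 'rV[R]_4) : R :=
  u ord0 (inord 0) * v ord0 (inord 0) + u ord0 (inord 1) * v ord0 (inord 1)
  + u ord0 (inord 2) * v ord0 (inord 2) - c ^+ 2 * (u ord0 tidx * v ord0 tidx).

Definition future_timelike {R : realType} (c : R) (v : 'rV[R]_4) : Prop :=
  lorentz_form c v v < 0 /\ 0 < v ord0 tidx.

Definition proper_orthochronous {R : realType} (c : R) (M : 'M[R]_4) : Prop :=
  [/\ forall u v, lorentz_form c (u *m M) (v *m M) = lorentz_form c u v,
      \det M = 1
    & forall v, future_timelike c v -> future_timelike c (v *m M)].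

Definition additive_subgroup {R : realType} (L : 'rV[R]_4 -> Prop) : Prop :=
  L 0 /\ forall u v, L u -> L v -> L (u - v).

From HB Require Import structures.
From mathcomp Require Import all_boot all_order all_algebra.
From mathcomp Require Import reals ring lra.
From Stdlib Require Import Classical_Prop.
Set Implicit Arguments. Unset Strict Implicit. Unset Printing Implicit Defensive.
Import Order.TTheory GRing.Theory Num.Theory.
Local Open Scope ring_scope.

(* In light-cone coordinates u = x + c t, w = x - c t, the boost B_k along the
   x-axis multiplies u by k and w by 1/k.  Up to a rotation, a nonzero element
   of an invariant subgroup has (u, w) <> (0, 0); an integer combination of its
   images under B_2 and B_(1/2) is then a nonzero vector on the null ray w = 0,
   y = z = 0.  Boosts rescale that ray by every positive factor, so the subgroup
   contains the whole null line, and rotations carry this line to null lines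
   whose integer combinations span R^4. *)

Section Coordinates.
Variable R : realType.

Definition mx_of n (f : nat -> nat -> R) : 'M[R]_n := \matrix_(i, j) f i j.

Lemma det_mx_of_succ n (f : nat -> nat -> R) :
  \det (mx_of n.+1 f) = \sum_(j < n.+1)
    f 0%N j * ((-1) ^+ j * \det (mx_of n (fun i k => f (bump 0 i) (bump j k)))).
Proof.
rewrite /mx_of (expand_det_row _ ord0); apply: eq_bigr => j _.
rewrite mxE /cofactor; congr (_ * (_ * \det _)).
by apply/matrixP => i k; rewrite !mxE.
Qed.

Lemma det_mx_of0 (f : nat -> nat -> R) : \det (mx_of 0 f) = 1.
Proof. exact: det_mx00. Qed.

Definition vec4 (x y z t : R) : 'rV[R]_4 := \row_(j < 4) [:: x; y; z; t]`_j.

Definition coord4 (v : 'rV[R]_4) (k : nat) : R := v ord0 (inord k).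

Lemma vec4_eta (v : 'rV[R]_4) : v = vec4 (coord4 v 0) (coord4 v 1) (coord4 v 2) (coord4 v 3).
Proof.
apply/rowP => -[[|[|[|[|j]]]] hj] //; rewrite mxE /coord4 /=; congr (v ord0 _);
  by apply: val_inj; rewrite /= inordK.
Qed.

Lemma vec4D x y z t x' y' z' t' :
  vec4 x y z t + vec4 x' y' z' t' = vec4 (x + x') (y + y') (z + z') (t + t').
Proof. by apply/rowP => -[[|[|[|[|j]]]] hj]; rewrite !mxE. Qed.

Lemma vec4N x y z t : - vec4 x y z t = vec4 (- x) (- y) (- z) (- t).
Proof. by apply/rowP => -[[|[|[|[|j]]]] hj]; rewrite !mxE //= oppr0. Qed.

Lemma vec4_0 : vec4 0 0 0 0 = 0.
Proof. by apply/rowP => -[[|[|[|[|j]]]] hj]; rewrite !mxE. Qed.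

Lemma vec4_mul_mx x y z t (f : nat -> nat -> R) :
  vec4 x y z t *m mx_of 4 f =
  vec4 (x * f 0%N 0%N + y * f 1%N 0%N + z * f 2%N 0%N + t * f 3%N 0%N)
       (x * f 0%N 1%N + y * f 1%N 1%N + z * f 2%N 1%N + t * f 3%N 1%N)
       (x * f 0%N 2%N + y * f 1%N 2%N + z * f 2%N 2%N + t * f 3%N 2%N)
       (x * f 0%N 3%N + y * f 1%N 3%N + z * f 2%N 3%N + t * f 3%N 3%N).
Proof.
apply/rowP => j; rewrite !mxE !big_ord_recl big_ord0 addr0 !mxE /= !addrA.
by case: j => -[|[|[|[|j]]]] hj.
Qed.

End Coordinates.

Ltac expand_det4 :=
  do 4! rewrite !det_mx_of_succ !big_ord_recr !big_ord0 /=; rewrite !det_mx_of0.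

Section Lorentz.
Variables (R : realType) (c : R).
Hypothesis c_gt0 : 0 < c.

Let c_neq0 : c != 0. Proof. by rewrite gt_eqF. Qed.

(* Light-cone coordinates: u = x + c t and w = x - c t. *)
Definition lcvec (u w y z : R) : 'rV[R]_4 :=
  vec4 ((u + w) / 2) y z ((u - w) / (2 * c)).

Lemma lcvec_surj (v : 'rV[R]_4) : exists u w y z, v = lcvec u w y z.
Proof.
rewrite (vec4_eta v); set x := coord4 v 0; set t := coord4 v 3.
exists (x + c * t), (x - c * t), (coord4 v 1), (coord4 v 2).
by rewrite /lcvec; congr vec4; field.
Qed.

Lemma lcvecD u w y z u' w' y' z' :
  lcvec u w y z + lcvec u' w' y' z' = lcvec (u + u') (w + w') (y + y') (z + z').
Proof. by rewrite /lcvec vec4D; congr vec4; ring. Qed.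

Lemma lcvecN u w y z : - lcvec u w y z = lcvec (- u) (- w) (- y) (- z).
Proof. by rewrite /lcvec vec4N; congr vec4; ring. Qed.

Lemma lcvec0 : lcvec 0 0 0 0 = 0.
Proof. by rewrite /lcvec addr0 subr0 !mul0r vec4_0. Qed.

Lemma lorentz_form_lcvec u w y z u' w' y' z' :
  lorentz_form c (lcvec u w y z) (lcvec u' w' y' z') =
  (u * w' + w * u') / 2 + y * y' + z * z'.
Proof. by rewrite /lorentz_form /lcvec !mxE !inordK //=; field; rewrite c_neq0. Qed.

Lemma future_timelike_lcvec_sign u w y z :
  future_timelike c (lcvec u w y z) -> 0 < u /\ w < 0.
Proof.
rewrite /future_timelike lorentz_form_lcvec /lcvec mxE /= => -[hg].
rewrite pmulr_lgt0 ?invr_gt0 ?mulr_gt0 // subr_gt0 => hwu.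
have hyz : 0 <= y * y + z * z by rewrite addr_ge0 // -expr2 sqr_ge0.
nra.
Qed.

Lemma lcvec_time_gt0 u w y z : w < u -> 0 < lcvec u w y z ord0 tidx.
Proof. by move=> hwu; rewrite mxE /= divr_gt0 ?mulr_gt0 // subr_gt0. Qed.

Lemma proper_orthochronous_lcvec (M : 'M[R]_4) :
  (forall u w y z u' w' y' z',
     lorentz_form c (lcvec u w y z *m M) (lcvec u' w' y' z' *m M) =
     lorentz_form c (lcvec u w y z) (lcvec u' w' y' z')) ->
  \det M = 1 ->
  (forall u w y z, 0 < u -> w < 0 -> 0 < (lcvec u w y z *m M) ord0 tidx) ->
  proper_orthochronous c M.
Proof.
move=> hform hdet htime.
have hform' v v' : lorentz_form c (v *m M) (v' *m M) = lorentz_form c v v'.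
  have [u [w [y [z ->]]]] := lcvec_surj v.
  by have [u' [w' [y' [z' ->]]]] := lcvec_surj v'.
split=> // v hv; split; first by rewrite hform'; case: hv.
have [u [w [y [z def_v]]]] := lcvec_surj v.
by move: hv; rewrite def_v => /future_timelike_lcvec_sign [] /htime; apply.
Qed.

(* The boost along the x-axis with Doppler factor k, i.e. rapidity ln k. *)
Definition boost (k : R) : 'M[R]_4 := mx_of 4 (fun i j =>
  match i, j with
  | 0, 0 | 3, 3 => ((k + k^-1) / 2)%R
  | 0, 3 => ((k - k^-1) / (2 * c))%R
  | 3, 0 => ((k - k^-1) / 2 * c)%R
  | 1, 1 | 2, 2 => 1%R
  | _, _ => 0%R
  end)%N.

Definition flip : 'M[R]_4 := mx_of 4 (fun i j =>
  match i, j with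
  | 0, 0 | 2, 2 => (-1)%R
  | 1, 1 | 3, 3 => 1%R
  | _, _ => 0%R
  end)%N.

Definition cycle_xyz : 'M[R]_4 := mx_of 4 (fun i j =>
  match i, j with
  | 2, 0 | 0, 1 | 1, 2 | 3, 3 => 1%R
  | _, _ => 0%R
  end)%N.

Lemma lcvec_boost k u w y z : k != 0 ->
  lcvec u w y z *m boost k = lcvec (k * u) (k^-1 * w) y z.
Proof.
by move=> k_neq0; rewrite /lcvec vec4_mul_mx /=; congr vec4; field; rewrite ?k_neq0 ?c_neq0.
Qed.

Lemma lcvec_flip u w y z : lcvec u w y z *m flip = lcvec (- w) (- u) y (- z).
Proof. by rewrite /lcvec vec4_mul_mx /=; congr vec4; ring. Qed.

Lemma lcvec_cycle_xyz u w y z :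
  lcvec u w y z *m cycle_xyz = lcvec (z + (u - w) / 2) (z - (u - w) / 2) ((u + w) / 2) y.
Proof. by rewrite /lcvec vec4_mul_mx /=; congr vec4; field. Qed.

Lemma boost_proper (k : R) : 0 < k -> proper_orthochronous c (boost k).
Proof.
move=> k_gt0; have k_neq0 : k != 0 by rewrite gt_eqF.
apply: proper_orthochronous_lcvec => [u w y z u' w' y' z'||u w y z u_gt0 w_lt0].
- by rewrite !lcvec_boost // !lorentz_form_lcvec; field.
- by rewrite /boost; expand_det4; field; rewrite ?k_neq0 ?c_neq0.
- rewrite lcvec_boost // lcvec_time_gt0 //.
  by rewrite (@lt_trans _ _ 0) ?mulr_gt0 // pmulr_rlt0 ?invr_gt0.
Qed.

Lemma flip_proper : proper_orthochronous c flip.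
Proof.
apply: proper_orthochronous_lcvec => [u w y z u' w' y' z'||u w y z u_gt0 w_lt0].
- by rewrite !lcvec_flip !lorentz_form_lcvec; field.
- by rewrite /flip; expand_det4; ring.
- by rewrite lcvec_flip lcvec_time_gt0 //; lra.
Qed.

Lemma cycle_xyz_proper : proper_orthochronous c cycle_xyz.
Proof.
apply: proper_orthochronous_lcvec => [u w y z u' w' y' z'||u w y z u_gt0 w_lt0].
- by rewrite !lcvec_cycle_xyz !lorentz_form_lcvec; field.
- by rewrite /cycle_xyz; expand_det4; ring.
- rewrite lcvec_cycle_xyz lcvec_time_gt0 //; lra.
Qed.

End Lorentz.

Section AdditiveSubgroup.
Variables (R : realType) (L : 'rV[R]_4 -> Prop).
Hypothesis hL : additive_subgroup L.

Lemma subgroup0 : L 0. Proof. by case: hL. Qed.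

Lemma subgroupB u v : L u -> L v -> L (u - v). Proof. by case: hL => _; apply. Qed.

Lemma subgroupN v : L v -> L (- v).
Proof. by rewrite -sub0r; apply: subgroupB subgroup0. Qed.

Lemma subgroupD u v : L u -> L v -> L (u + v).
Proof. by move=> hu /subgroupN hv; rewrite -[v]opprK; apply: subgroupB. Qed.

End AdditiveSubgroup.

Section InvariantSubgroup.
Variables (R : realType) (c : R) (L : 'rV[R]_4 -> Prop).
Hypotheses (c_gt0 : 0 < c) (hL : additive_subgroup L)
  (hinv : forall M, proper_orthochronous c M -> forall v, L v -> L (v *m M)).

Let boost_stable (k : R) v : 0 < k -> L v -> L (v *m boost c k).
Proof. by move=> k_gt0; apply/hinv/boost_proper. Qed.

Lemma null_ray_scale (s : R) :
  s != 0 -> L (lcvec c s 0 0 0) -> forall r, L (lcvec c r 0 0 0).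
Proof.
move=> s_neq0 hs r.
have pos r' : 0 < r' / s -> L (lcvec c r' 0 0 0).
  move=> hr; have := boost_stable hr hs.
  by rewrite (lcvec_boost c_gt0) ?gt_eqF // mulr0 divfK.
have [r_lt0|/pos //|/eqP] := ltgtP (r / s) 0; last first.
  rewrite mulf_eq0 invr_eq0 (negbTE s_neq0) orbF => /eqP ->.
  by rewrite lcvec0; apply: subgroup0.
have /(subgroupN hL) : L (lcvec c (- r) 0 0 0) by apply: pos; rewrite mulNr oppr_gt0.
by rewrite lcvecN opprK !oppr0.
Qed.

Lemma span_null_ray : (forall r, L (lcvec c r 0 0 0)) -> forall v, L v.
Proof.
move=> hray.
have hw r : L (lcvec c 0 r 0 0).
  by have := hinv (flip_proper c_gt0) (hray (- r)); rewrite lcvec_flip oppr0 opprK.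
have huw u w : L (lcvec c u w 0 0).
  by have := subgroupD hL (hray u) (hw w); rewrite lcvecD !addr0 add0r.
have hy r : L (lcvec c 0 0 r 0).
  have := hinv (cycle_xyz_proper c_gt0) (huw r r).
  by rewrite (lcvec_cycle_xyz c_gt0) subrr mul0r addr0 subr0 mulrDl -splitr.
have hz r : L (lcvec c 0 0 0 r).
  have := hinv (cycle_xyz_proper c_gt0) (hy r).
  by rewrite (lcvec_cycle_xyz c_gt0) subrr addr0 !mul0r subr0 addr0.
move=> v; have [u [w [y [z ->]]]] := lcvec_surj c_gt0 v.
have := subgroupD hL (subgroupD hL (huw u w) (hy y)) (hz z).
by rewrite !lcvecD !addr0 !add0r.
Qed.

(* B_2 + B_(1/2) - 2 kills y and z and halves u and w; then 2 B_2 - 1 kills w. *)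
Lemma null_ray_of_lcvec u w y z : L (lcvec c u w y z) -> L (lcvec c (3 / 2 * u) 0 0 0).
Proof.
set v := lcvec c u w y z => hv.
have two_gt0 : (0 : R) < 2 by [].
have half_gt0 : (0 : R) < 2^-1 by rewrite invr_gt0.
have hp : L (lcvec c (u / 2) (w / 2) 0 0).
  have -> : lcvec c (u / 2) (w / 2) 0 0 = v *m boost c 2 + v *m boost c 2^-1 - v - v.
    by rewrite !(lcvec_boost c_gt0) ?invr_eq0 ?pnatr_eq0 // !lcvecN !lcvecD; congr lcvec; field.
  by do 2!apply: (subgroupB hL) => //; apply: (subgroupD hL); apply: boost_stable.
set p := lcvec c (u / 2) (w / 2) 0 0 in hp.
have -> : lcvec c (3 / 2 * u) 0 0 0 = p *m boost c 2 + p *m boost c 2 - p.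
  by rewrite !(lcvec_boost c_gt0) ?pnatr_eq0 // !lcvecN !lcvecD; congr lcvec; field.
by apply: (subgroupB hL) => //; apply: (subgroupD hL); apply: boost_stable.
Qed.

Lemma null_ray_of_nonzero v : L v -> v != 0 -> exists2 s, s != 0 & L (lcvec c s 0 0 0).
Proof.
have null_ray_of_u u w y z :
    L (lcvec c u w y z) -> u != 0 -> exists2 s, s != 0 & L (lcvec c s 0 0 0).
  move=> h u_neq0; exists (3 / 2 * u); last exact: null_ray_of_lcvec h.
  by rewrite mulf_neq0 // mulf_neq0 ?invr_eq0 ?pnatr_eq0.
have [u [w [y [z ->]]]] := lcvec_surj c_gt0 v; move=> hv v_neq0.
have [u0|/(null_ray_of_u _ _ _ _ hv) //] := eqVneq u 0.
have [w0|w_neq0] := eqVneq w 0; last first.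
  have := hinv (flip_proper c_gt0) hv; rewrite lcvec_flip => /null_ray_of_u; apply.
  by rewrite oppr_eq0.
have := hinv (cycle_xyz_proper c_gt0) hv.
rewrite (lcvec_cycle_xyz c_gt0) u0 w0 subrr mul0r addr0 subr0 addr0 mul0r => hv1.
have [z0|/(null_ray_of_u _ _ _ _ hv1) //] := eqVneq z 0.
have := hinv (cycle_xyz_proper c_gt0) hv1.
rewrite (lcvec_cycle_xyz c_gt0) z0 subrr mul0r addr0 subr0 addr0 mul0r => hv2.
have [y0|/(null_ray_of_u _ _ _ _ hv2) //] := eqVneq y 0.
by move: v_neq0; rewrite u0 w0 y0 z0 lcvec0 eqxx.
Qed.

End InvariantSubgroup.

Theorem proposition3p8 (R : realType) (c : R) (hc : 0 < c)
    (L : 'rV[R]_4 -> Prop) (hL : additive_subgroup L)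
    (hinv : forall M : 'M[R]_4, proper_orthochronous c M ->
              forall v, L v -> L (v *m M)) :
  (forall v, L v <-> v = 0) \/ (forall v, L v).
Proof.
have [[v hv v_neq0]|no_nonzero] := classic (exists2 v, L v & v != 0).
  right; have [s s_neq0 hs] := null_ray_of_nonzero hc hL hinv hv v_neq0.
  exact: span_null_ray hc hL hinv (null_ray_scale hc hL hinv s_neq0 hs).
left=> v; split=> [hv|->]; last exact: subgroup0.
by apply/eqP; apply: contra_notT no_nonzero => v_neq0; exists v.
Qed.
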